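(* Let $\alpha_2\in\mathbb{C}$ and let $u(t)$ be a solution of the fourth-order equation $$\frac{d^4u}{dt^4}=10u\left(\frac{du}{dt}\right)^2+10u^2\frac{d^2u}{dt^2}-6u^5+tu+\alpha_2 .$$ Define $$q_1=u,\quad p_1=\frac{d^3u}{dt^3}+\left(\frac{du}{dt}\right)^2-\frac t2+\left(3u^3-6u\frac{du}{dt}-2\frac{d^2u}{dt^2}\right)u,\quad q_2=\frac{d^2u}{dt^2}-2u\frac{du}{dt},\quad p_2=\frac{du}{dt}-u^2 .$$ Then the map $(u,u',u'',u''')\mapsto(q_1,p_1,q_2,p_2)$ is birational, and $(q_1,p_1,q_2,p_2)$ satisfies the Hamiltonian system $$\frac{dq_1}{dt}=\frac{\partial H}{\partial p_1}=q_1^2+p_2,\quad \frac{dp_1}{dt}=-\frac{\partial H}{\partial q_1}=-2q_1p_1+\alpha_2-\frac12,\quad \frac{dq_2}{dt}=\frac{\partial H}{\partial p_2}=-3p_2^2+p_1+\frac t2,\quad \frac{dp_2}{dt}=-\frac{\partial H}{\partial q_2}=q_2$$ with the polynomial Hamiltonian $$H=q_1^2p_1+\left(\frac12-\alpha_2\right)q_1-p_2^3+\frac t2p_2-\frac{q_2^2}{2}+p_1p_2 .$$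
   Context: This fourth-order equation is the second member $P_{II}^{(2)}$ of the second Painlevé hierarchy. Primes denote $d/dt$. *)

(* mathcomp-analysis derivatives over the complex numbers
   R[i] (R : realType), with the complex modulus as norm, so derive1 is the
   complex derivative. *)
From HB Require Import structures.
From mathcomp Require Import all_boot all_order all_algebra.
From mathcomp Require Import all_classical all_reals all_analysis.
From mathcomp Require Import complex.
Import Order.TTheory GRing.Theory Num.Theory.
Import numFieldNormedType.Exports.

Set Implicit Arguments.
Unset Strict Implicit.
Unset Printing Implicit Defensive.

Local Open Scope ring_scope.

Definition CC (R : realType) := (R[i])^o.

Section Defs.
Variable K : fieldType.

Inductive polyfun5 : (('I_5 -> K) -> K) -> Prop :=
  | pf_const (c : K) : polyfun5 (fun _ => c)
  | pf_var (i : 'I_5) : polyfun5 (fun v => v i)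
  | pf_add f g : polyfun5 f -> polyfun5 g -> polyfun5 (fun v => f v + g v)
  | pf_mul f g : polyfun5 f -> polyfun5 g -> polyfun5 (fun v => f v * g v)
  | pf_ext f g : (forall v, f v = g v) -> polyfun5 f -> polyfun5 g.

(* A rational function in the 5 variables (t, x_0, x_1, x_2, x_3):
   a pair (numerator, denominator) of polynomial functions, the denominator
   not identically zero. *)
Record ratfun5 := RatFun5 {
  rf_num : ('I_5 -> K) -> K;
  rf_den : ('I_5 -> K) -> K;
  rf_num_poly : polyfun5 rf_num;
  rf_den_poly : polyfun5 rf_den;
  rf_den_nz : exists v, rf_den v != 0 }.

Definition ext5 (t : K) (x : 'I_4 -> K) : 'I_5 -> K :=
  fun i => match unlift ord0 i with None => t | Some j => x j end.

Definition rf_defined (f : ratfun5) (t : K) (x : 'I_4 -> K) : Prop :=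
  rf_den f (ext5 t x) != 0.

Definition rf_eval (f : ratfun5) (t : K) (x : 'I_4 -> K) : K :=
  rf_num f (ext5 t x) / rf_den f (ext5 t x).

(* A rational map K^4 --> K^4 over K(t) (t is a parameter). *)
Definition ratmap := 'I_4 -> ratfun5.

Definition rm_defined (F : ratmap) (t : K) (x : 'I_4 -> K) : Prop :=
  forall i, rf_defined (F i) t x.

Definition rm_eval (F : ratmap) (t : K) (x : 'I_4 -> K) : 'I_4 -> K :=
  fun i => rf_eval (F i) t x.

(* F and G are mutually inverse rational maps: G o F = id and F o G = id
   wherever the composites are defined, and these domains are nonempty
   (hence Zariski-dense). *)
Definition ratmap_inverse (F G : ratmap) : Prop :=
  [/\ (exists t x, rm_defined F t x /\ rm_defined G t (rm_eval F t x)),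
      (exists t y, rm_defined G t y /\ rm_defined F t (rm_eval G t y)),
      (forall t x, rm_defined F t x -> rm_defined G t (rm_eval F t x) ->
         forall i, rm_eval G t (rm_eval F t x) i = x i) &
      (forall t y, rm_defined G t y -> rm_defined F t (rm_eval G t y) ->
         forall i, rm_eval F t (rm_eval G t y) i = y i)].

Definition birational (Phi : K -> ('I_4 -> K) -> ('I_4 -> K)) : Prop :=
  exists F G : ratmap, ratmap_inverse F G /\
    forall t x, rm_defined F t x -> forall i, Phi t x i = rm_eval F t x i.

(* x = (u, u', u'', u'''), output = (q1, p1, q2, p2) *)
Definition PII2_q1 (t u u1 u2 u3 : K) : K := u.
Definition PII2_p1 (t u u1 u2 u3 : K) : K :=
  u3 + u1 ^+ 2 - t / 2%:R + (3%:R * u ^+ 3 - 6%:R * u * u1 - 2%:R * u2) * u.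
Definition PII2_q2 (t u u1 u2 u3 : K) : K := u2 - 2%:R * u * u1.
Definition PII2_p2 (t u u1 u2 u3 : K) : K := u1 - u ^+ 2.

Definition PII2_map (t : K) (x : 'I_4 -> K) : 'I_4 -> K :=
  let u := x (inord 0) in let u1 := x (inord 1) in
  let u2 := x (inord 2) in let u3 := x (inord 3) in
  fun i => match val i with
           | 0 => PII2_q1 t u u1 u2 u3
           | 1 => PII2_p1 t u u1 u2 u3
           | 2 => PII2_q2 t u u1 u2 u3
           | _ => PII2_p2 t u u1 u2 u3
           end.

Definition PII2_H (alpha2 t q1 p1 q2 p2 : K) : K :=
  q1 ^+ 2 * p1 + (1 / 2%:R - alpha2) * q1 - p2 ^+ 3 + t / 2%:R * p2
  - q2 ^+ 2 / 2%:R + p1 * p2.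

End Defs.

Definition jet4 (R : realType) (u : CC R -> CC R) (t : CC R) : 'I_4 -> CC R :=
  fun i => derive1n (val i) u t.

(* The map is triangular: q1 = u, and p2, q2, p1 are u', u'', u''' plus
   polynomials in lower derivatives, so back-substitution inverts it by a
   polynomial map.  Along a solution, differentiating q1, p1, q2, p2 and
   eliminating u'''' with the equation leaves polynomial identities in
   (t, u, u', u'', u''') that match the partial derivatives of H. *)
From HB Require Import structures.
From mathcomp Require Import all_boot all_order all_algebra.
From mathcomp Require Import all_classical all_reals all_analysis.
From mathcomp Require Import complex ring.
Import Order.TTheory GRing.Theory Num.Theory.
Import numFieldNormedType.Exports.
Set Implicit Arguments.
Unset Strict Implicit.
Unset Printing Implicit Defensive.
Local Open Scope ring_scope.

Section PolynomialMaps.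
Variable K : fieldType.
Implicit Types (f : ('I_5 -> K) -> K) (Phi Psi : K -> ('I_4 -> K) -> 'I_4 -> K).

Lemma pf_opp f : polyfun5 f -> polyfun5 (fun v => - f v).
Proof.
move=> pf; apply: (pf_ext (f := fun v => -1 * f v)) => [v|]; first by rewrite mulN1r.
exact: pf_mul (pf_const _) pf.
Qed.

Lemma pf_exp f n : polyfun5 f -> polyfun5 (fun v => f v ^+ n).
Proof.
move=> pf; elim: n => [|n IHn].
  by apply: (pf_ext (f := fun _ => 1)) => [v|]; rewrite ?expr0 //; apply: pf_const.
by apply: (pf_ext (f := fun v => f v * f v ^+ n)) => [v|]; rewrite ?exprS //; apply: pf_mul.
Qed.

Definition polymap Phi :=
  forall i, polyfun5 (fun v => Phi (v ord0) (fun j => v (lift ord0 j)) i).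

Lemma const1_nz : exists v : 'I_5 -> K, (fun _ => 1 : K) v != 0.
Proof. by exists (fun _ => 0); apply: oner_neq0. Qed.

Definition polymap_ratmap Phi (pPhi : polymap Phi) : ratmap K :=
  fun i => RatFun5 (pPhi i) (pf_const 1) const1_nz.

Lemma polymap_ratmap_defined Phi (pPhi : polymap Phi) t x :
  rm_defined (polymap_ratmap pPhi) t x.
Proof. by move=> i; apply: oner_neq0. Qed.

Lemma polymap_ratmapE Phi (pPhi : polymap Phi) t x :
  rm_eval (polymap_ratmap pPhi) t x = Phi t x.
Proof.
apply/funext => i; rewrite /rm_eval /rf_eval /= divr1.
have -> : (fun j => ext5 t x (lift ord0 j)) = x by apply/funext => j; rewrite /ext5 liftK.
by rewrite /ext5 unlift_none.
Qed.

Lemma birational_polymap Phi Psi : polymap Phi -> polymap Psi ->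
  (forall t, cancel (Phi t) (Psi t)) -> (forall t, cancel (Psi t) (Phi t)) ->
  birational Phi.
Proof.
move=> pPhi pPsi PhiK PsiK.
exists (polymap_ratmap pPhi), (polymap_ratmap pPsi).
split=> [|t x _ i]; last by rewrite polymap_ratmapE.
split=> [||t x _ _ i|t y _ _ i]; rewrite ?polymap_ratmapE ?PhiK ?PsiK //.
  by exists 0, (fun _ => 0); split; apply: polymap_ratmap_defined.
by exists 0, (fun _ => 0); split; apply: polymap_ratmap_defined.
Qed.

End PolynomialMaps.

Ltac polyfun :=
  repeat match goal with
  | |- polyfun5 (fun _ => ?c) => apply: pf_const
  | |- polyfun5 (fun v => v ?i) => apply: pf_var
  | |- polyfun5 (fun v => @?a v + @?b v) => apply: (pf_add (f := a) (g := b))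
  | |- polyfun5 (fun v => - @?a v) => apply: (pf_opp (f := a))
  | |- polyfun5 (fun v => @?a v * @?b v) => apply: (pf_mul (f := a) (g := b))
  | |- polyfun5 (fun v => @?a v ^+ ?n) => apply: (pf_exp (f := a) n)
  end.

Lemma val_inord4 k : (k < 4)%N -> \val (inord k : 'I_4) = k.
Proof. exact: inordK. Qed.

Lemma ord4_ind (P : 'I_4 -> Prop) :
  P (inord 0) -> P (inord 1) -> P (inord 2) -> P (inord 3) -> forall i, P i.
Proof.
by move=> P0 P1 P2 P3 i; case: i (inord_val i) => [[|[|[|[|k]]]] //= _] <-.
Qed.

Section PII2Birational.
Variable K : fieldType.

Definition PII2_inv (t : K) (y : 'I_4 -> K) : 'I_4 -> K :=
  let q1 := y (inord 0) in let p1 := y (inord 1) in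
  let q2 := y (inord 2) in let p2 := y (inord 3) in
  let u1 := p2 + q1 ^+ 2 in let u2 := q2 + 2%:R * q1 * u1 in
  fun i => match val i with
           | 0 => q1
           | 1 => u1
           | 2 => u2
           | _ => p1 - u1 ^+ 2 + t / 2%:R - (3%:R * q1 ^+ 3 - 6%:R * q1 * u1 - 2%:R * u2) * q1
           end.

Lemma PII2_polymap : polymap (@PII2_map K).
Proof.
by case=> [[|[|[|k]]] ?]; rewrite /PII2_map /PII2_q1 /PII2_p1 /PII2_q2 /PII2_p2 /=; polyfun.
Qed.

Lemma PII2_inv_polymap : polymap PII2_inv.
Proof. by case=> [[|[|[|k]]] ?]; rewrite /PII2_inv /=; polyfun. Qed.

Lemma PII2_mapK t : cancel (@PII2_map K t) (PII2_inv t).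
Proof.
move=> x; apply/funext.
by apply: ord4_ind; rewrite /PII2_inv /PII2_map /PII2_q1 /PII2_p1 /PII2_q2 /PII2_p2 !val_inord4 //; ring.
Qed.

Lemma PII2_invK t : cancel (PII2_inv t) (@PII2_map K t).
Proof.
move=> y; apply/funext.
by apply: ord4_ind; rewrite /PII2_inv /PII2_map /PII2_q1 /PII2_p1 /PII2_q2 /PII2_p2 !val_inord4 //; ring.
Qed.

Lemma PII2_birational : birational (@PII2_map K).
Proof.
exact: birational_polymap PII2_polymap PII2_inv_polymap PII2_mapK PII2_invK.
Qed.

End PII2Birational.

Section ComplexDerivative.
Variable R : realType.
Implicit Types (f g : CC R -> CC R) (x c df dg : CC R).

Lemma is_derive1_cst c x : is_derive x 1 (fun _ => c) 0.
Proof. exact: is_derive_cst. Qed.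

Lemma is_derive1_id x : is_derive x 1 (fun s => s) 1.
Proof. exact: is_derive_id. Qed.

Lemma is_derive1D f g x df dg : is_derive x 1 f df -> is_derive x 1 g dg ->
  is_derive x 1 (fun s => f s + g s) (df + dg).
Proof. exact: is_deriveD. Qed.

Lemma is_derive1N f x df : is_derive x 1 f df -> is_derive x 1 (fun s => - f s) (- df).
Proof. exact: is_deriveN. Qed.

Lemma is_derive1M f g x df dg : is_derive x 1 f df -> is_derive x 1 g dg ->
  is_derive x 1 (fun s => f s * g s) (f x * dg + g x * df).
Proof. exact: is_deriveM. Qed.

Lemma is_derive1X f n x df : is_derive x 1 f df ->
  is_derive x 1 (fun s => f s ^+ n) (n%:R * f x ^+ n.-1 * df).
Proof. by move=> fdf; have := is_deriveX n fdf; rewrite exprfctE. Qed.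

Lemma derive1_val f x df : is_derive x 1 f df -> derive1 f x = df.
Proof. by move=> fdf; rewrite derive1E derive_val. Qed.

End ComplexDerivative.

Ltac differentiate :=
  repeat match goal with
  | |- is_derive _ _ (fun _ => ?c) _ => exact: (is_derive1_cst c)
  | |- is_derive _ _ (fun s => s) _ => apply: is_derive1_id
  | |- is_derive _ _ (fun s => @?f s + @?g s) _ => eapply (is_derive1D (f := f) (g := g))
  | |- is_derive _ _ (fun s => - @?f s) _ => eapply (is_derive1N (f := f))
  | |- is_derive _ _ (fun s => @?f s * @?g s) _ => eapply (is_derive1M (f := f) (g := g))
  | |- is_derive _ _ (fun s => @?f s ^+ ?n) _ => eapply (is_derive1X (f := f) n)
  (* [constr_eq] rather than a non-linear pattern: comparing two different
     [derive1n k u] up to conversion unfolds the limits defining them. *)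
  | H : is_derive _ _ ?g _ |- is_derive _ _ ?f _ => constr_eq f g; exact: H
  end.

Section HamiltonianPartials.
Variable R : realType.

Lemma derive1_PII2_H (a t q1 p1 q2 p2 : CC R) :
  [/\ derive1 (fun y => PII2_H a t q1 y q2 p2) p1 = q1 ^+ 2 + p2,
      derive1 (fun y => PII2_H a t y p1 q2 p2) q1 = 2%:R * q1 * p1 + 1 / 2%:R - a,
      derive1 (fun y => PII2_H a t q1 p1 q2 y) p2 = - 3%:R * p2 ^+ 2 + p1 + t / 2%:R &
      derive1 (fun y => PII2_H a t q1 p1 y p2) q2 = - q2].
Proof.
rewrite /PII2_H; split; eapply derive1_val;
  (eapply is_derive_eq; first by differentiate); by field.
Qed.

End HamiltonianPartials.

Section PII2Flow.
Variables (R : realType) (alpha2 : CC R) (u : CC R -> CC R) (t : CC R).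
Hypothesis u_derivable : forall k, (k < 4)%N -> derivable (derive1n k u) t 1.
Hypothesis PII2_at_t :
  derive1n 4 u t =
    10%:R * u t * (derive1 u t) ^+ 2 + 10%:R * (u t) ^+ 2 * derive1n 2 u t
    - 6%:R * (u t) ^+ 5 + t * u t + alpha2.

Local Notation q1 := (fun s => PII2_map s (jet4 u s) (inord 0)).
Local Notation p1 := (fun s => PII2_map s (jet4 u s) (inord 1)).
Local Notation q2 := (fun s => PII2_map s (jet4 u s) (inord 2)).
Local Notation p2 := (fun s => PII2_map s (jet4 u s) (inord 3)).

Lemma is_derive_jet k : (k < 4)%N ->
  is_derive t 1 (fun s => derive1n k u s) (derive1n k.+1 u t).
Proof. by move=> k4; rewrite derive1nS derive1E; apply/derivableP/u_derivable. Qed.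

Lemma PII2_hamiltonian_flow :
  [/\ is_derive t 1 q1 (q1 t ^+ 2 + p2 t),
      is_derive t 1 p1 (- 2%:R * q1 t * p1 t + alpha2 - 1 / 2%:R),
      is_derive t 1 q2 (- 3%:R * p2 t ^+ 2 + p1 t + t / 2%:R) &
      is_derive t 1 p2 (q2 t)].
Proof.
have d0 := is_derive_jet (isT : 0 < 4)%N; have d1 := is_derive_jet (isT : 1 < 4)%N.
have d2 := is_derive_jet (isT : 2 < 4)%N; have d3 := is_derive_jet (isT : 3 < 4)%N.
rewrite /PII2_map /jet4 !val_inord4; [|by []..].
rewrite /PII2_q1 /PII2_p1 /PII2_q2 /PII2_p2.
split; (eapply is_derive_eq; first by differentiate);
  rewrite ?PII2_at_t ?derive1n0 -?derive1n1.
(* Generalize the jet so that [field] does not compare its entries by conversion. *)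
all: move: (u t) (derive1n 1 u t) (derive1n 2 u t) (derive1n 3 u t) => u0 u1 u2 u3.
all: by field.
Qed.

End PII2Flow.

Theorem theorem2p1 (R : realType) (alpha2 : CC R) (D : set (CC R))
    (u : CC R -> CC R) :
  open D ->
  (forall t, D t -> forall k : nat, (k < 4)%N -> derivable (derive1n k u) t 1) ->
  (forall t, D t ->
     derive1n 4 u t =
       10%:R * u t * (derive1 u t) ^+ 2 + 10%:R * (u t) ^+ 2 * derive1n 2 u t
       - 6%:R * (u t) ^+ 5 + t * u t + alpha2) ->
  birational (@PII2_map (CC R)) /\
  (forall t, D t ->
     let q1 := fun s => PII2_map s (jet4 u s) (inord 0) in
     let p1 := fun s => PII2_map s (jet4 u s) (inord 1) in
     let q2 := fun s => PII2_map s (jet4 u s) (inord 2) in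
     let p2 := fun s => PII2_map s (jet4 u s) (inord 3) in
     let H := PII2_H alpha2 in
     [/\ derivable q1 t 1, derivable p1 t 1, derivable q2 t 1 & derivable p2 t 1] /\
     [/\ derive1 q1 t = derive1 (fun y => H t (q1 t) y (q2 t) (p2 t)) (p1 t)
         /\ derive1 q1 t = (q1 t) ^+ 2 + p2 t,
         derive1 p1 t = - derive1 (fun y => H t y (p1 t) (q2 t) (p2 t)) (q1 t)
         /\ derive1 p1 t = - 2%:R * q1 t * p1 t + alpha2 - 1 / 2%:R,
         derive1 q2 t = derive1 (fun y => H t (q1 t) (p1 t) (q2 t) y) (p2 t)
         /\ derive1 q2 t = - 3%:R * (p2 t) ^+ 2 + p1 t + t / 2%:R &
         derive1 p2 t = - derive1 (fun y => H t (q1 t) (p1 t) y (p2 t)) (q2 t)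
         /\ derive1 p2 t = q2 t]).
Proof.
move=> _ u_derivable u_PII2; split; first exact: PII2_birational.
move=> t Dt q1 p1 q2 p2 H.
have [dq1 dp1 dq2 dp2] := PII2_hamiltonian_flow (u_derivable t Dt) (u_PII2 t Dt).
have [Hp1 Hq1 Hp2 Hq2] := derive1_PII2_H alpha2 t (q1 t) (p1 t) (q2 t) (p2 t).
split; first by split; apply: ex_derive.
rewrite /H Hp1 Hq1 Hp2 Hq2 (derive1_val dq1) (derive1_val dp1).
rewrite (derive1_val dq2) (derive1_val dp2) /q1 /p1 /q2 /p2.
by split; split=> //; ring.
Qed.
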